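(* Let $\mathbb{K}$ be an infinite field, let $P,Q\in\mathbb{K}[x_1,\dots,x_n]$, let $X$ be a nonsingular irreducible affine variety over $\mathbb{K}$, and let $\pi=(\pi_1,\dots,\pi_n):X\to\mathbb{K}^n$ be a regular mapping such that $Q\circ\pi$ is not identically zero and $\frac{P\circ\pi}{Q\circ\pi}\in\mathcal{P}(X)_{x_0}$ for some point $x_0\in X$. Let $\varphi=(\varphi_1,\dots,\varphi_n):(X,x_0)\to\mathbb{K}^n$ be a germ of a regular mapping such that for each $1\le i\le n$, $$\varphi_i-\pi_i\in(Q\circ\pi)\,\mathfrak{m}_{x_0}\quad\text{in the ring }\mathcal{P}(X)_{x_0},$$ where $\mathfrak{m}_{x_0}$ is the maximal ideal of $\mathcal{P}(X)_{x_0}$. Then $Q\circ\varphi$ is not identically zero and the rational function $\frac{P\circ\varphi}{Q\circ\varphi}$ is regular at $x_0$, i.e. belongs to $\mathcal{P}(X)_{x_0}$.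
   Context: $\mathcal{P}(X)$ is the coordinate ring of the affine variety $X$ and $\mathcal{P}(X)_{x_0}$ its localisation at the maximal ideal of $x_0$ (the ring of germs of regular functions at $x_0$). A rational function is regular at $x_0$ if it lies in $\mathcal{P}(X)_{x_0}$ inside the field of fractions. *)

From HB Require Import structures.
From mathcomp Require Import all_boot all_order all_algebra.
From mathcomp Require Import fraction.
From mathcomp.multinomials Require Import mpoly.

Set Implicit Arguments.
Unset Strict Implicit.
Unset Printing Implicit Defensive.

Import GRing.Theory.
Local Open Scope ring_scope.

Notation "x %:F" := (@FracField.tofrac _ x) : ring_scope.

(* Points of K^m are functions 'I_m -> K; K[y] = {mpoly K[m]};         *)
(* K(y) = {fraction {mpoly K[m]}}.                                     *)

Section Defs.
Variables (K : fieldType) (m : nat).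

Definition point := 'I_m -> K.

Definition infinite_field := forall s : seq K, exists x : K, x \notin s.

Definition vanishing (X : point -> Prop) (p : {mpoly K[m]}) : Prop :=
  forall x, X x -> p.@[x] = 0.

Definition zero_set (S : {mpoly K[m]} -> Prop) (x : point) : Prop :=
  forall p, S p -> p.@[x] = 0.

Definition algebraic_set (X : point -> Prop) : Prop :=
  exists S, forall x, X x <-> zero_set S x.

Definition irreducible (X : point -> Prop) : Prop :=
  (exists x, X x) /\
  forall Y Z : point -> Prop, algebraic_set Y -> algebraic_set Z ->
    (forall x, X x -> Y x \/ Z x) ->
    (forall x, X x -> Y x) \/ (forall x, X x -> Z x).

Definition affine_variety (X : point -> Prop) := algebraic_set X.

Definition prime_ideal (I : {mpoly K[m]} -> Prop) : Prop :=
  [/\ I 0, ~ I 1,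
      (forall p q, I p -> I q -> I (p + q)),
      (forall p q, I q -> I (p * q)) &
      (forall p q, I (p * q) -> I p \/ I q)].

(* a chain p_0 ⊊ p_1 ⊊ ... ⊊ p_d of prime ideals of K[y] containing
   I(X), i.e. a chain of prime ideals of length d in P(X) = K[y]/I(X) *)
Definition prime_chain (X : point -> Prop) (d : nat) : Prop :=
  exists c : nat -> ({mpoly K[m]} -> Prop),
    (forall i, (i <= d)%N ->
       prime_ideal (c i) /\ (forall p, vanishing X p -> c i p)) /\
    (forall i, (i < d)%N ->
       (forall p, c i p -> c i.+1 p) /\ exists p, c i.+1 p /\ ~ c i p).

Definition dimension (X : point -> Prop) (d : nat) : Prop :=
  prime_chain X d /\ ~ prime_chain X d.+1.

Definition jacobian k (f : 'I_k -> {mpoly K[m]}) (x : point) : 'M[K]_(k, m) :=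
  \matrix_(i < k, j < m) (f i)^`M(j).@[x].

Definition nonsingular_point (X : point -> Prop) (x : point) : Prop :=
  exists d, dimension X d /\
    (exists k (f : 'I_k -> {mpoly K[m]}),
        (forall i, vanishing X (f i)) /\ \rank (jacobian f x) = (m - d)%N) /\
    (forall k (f : 'I_k -> {mpoly K[m]}),
        (forall i, vanishing X (f i)) -> (\rank (jacobian f x) <= m - d)%N).

Definition nonsingular (X : point -> Prop) : Prop :=
  forall x, X x -> nonsingular_point X x.

Definition ratfun := {fraction {mpoly K[m]}}.

(* elements of K[y]_{m_x0}: rational functions a/b with b(x0) <> 0; these
   are the lifts of the elements of P(X)_{x0} = K[y]_{m_x0} / I(X) K[y]_{m_x0} *)
Definition in_local (x0 : point) (f : ratfun) : Prop :=
  exists a b : {mpoly K[m]}, b.@[x0] != 0 /\ f = a%:F / b%:F.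

(* lifts of the elements of the maximal ideal m_{x0} of P(X)_{x0} *)
Definition in_maxideal (x0 : point) (f : ratfun) : Prop :=
  exists a b : {mpoly K[m]},
    a.@[x0] = 0 /\ b.@[x0] != 0 /\ f = a%:F / b%:F.

(* elements of K[y]_{m_x0} whose image in P(X)_{x0} is zero,
   i.e. the ideal I(X) K[y]_{m_x0} *)
Definition zero_germ (X : point -> Prop) (x0 : point) (f : ratfun) : Prop :=
  exists a b : {mpoly K[m]},
    vanishing X a /\ b.@[x0] != 0 /\ f = a%:F / b%:F.

Definition poly_comp n (P : {mpoly K[n]}) (pi : 'I_n -> {mpoly K[m]})
  : {mpoly K[m]} := mmap (fun c : K => c%:MP) pi P.

Definition rat_comp n (P : {mpoly K[n]}) (phi : 'I_n -> ratfun) : ratfun :=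
  mmap (fun c : K => (c%:MP : {mpoly K[m]})%:F) phi P.

End Defs.

From HB Require Import structures.
From mathcomp Require Import all_boot all_order all_algebra.
From mathcomp Require Import fraction.
From mathcomp.multinomials Require Import mpoly.
From mathcomp Require Import ring.
Import GRing.Theory.
Local Open Scope ring_scope.

(* Substituting into a polynomial respects congruences modulo an ideal, so
   [phi_i = pi_i mod (Q o pi) m_x0] gives [P o phi = P o pi + (Q o pi) r1] and
   [Q o phi = (Q o pi)(1 + r2)] in P(X)_x0, with r1, r2 in m_x0.  As [1 + r2] is a
   unit of the local ring, [(P o phi)/(Q o phi) = (h + r1)/(1 + r2)] is regular,
   where [h] is the germ of [(P o pi)/(Q o pi)].  And [Q o phi] is not zero in
   P(X)_x0, for otherwise so would be [Q o pi]; but a polynomial vanishing in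
   P(X)_x0 vanishes on X, because the ideal of the irreducible X is prime. *)

Definition is_ideal {R : comNzRingType} (I : R -> Prop) :=
  [/\ I 0, forall p q, I p -> I q -> I (p + q) & forall r p, I p -> I (r * p)].

Section CongruenceModuloIdeal.
Context {R : comNzRingType} (L J : R -> Prop).
Hypotheses (L0 : L 0) (L1 : L 1).
Hypotheses (LD : forall u v, L u -> L v -> L (u + v)).
Hypotheses (LM : forall u v, L u -> L v -> L (u * v)).
Hypotheses (J0 : J 0) (JD : forall u v, J u -> J v -> J (u + v)).
Hypotheses (JM : forall l u, L l -> J u -> J (l * u)).

Definition congr_mod u v := [/\ L u, L v & J (u - v)].

Lemma congr_mod_refl u : L u -> congr_mod u u.
Proof. by move=> Lu; split; rewrite ?subrr. Qed.

Lemma congr_modD u v u' v' :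
  congr_mod u v -> congr_mod u' v' -> congr_mod (u + u') (v + v').
Proof.
move=> [Lu Lv Juv] [Lu' Lv' Juv'].
by split; [exact: LD | exact: LD | rewrite opprD addrACA; exact: JD].
Qed.

Lemma congr_modM u v u' v' :
  congr_mod u v -> congr_mod u' v' -> congr_mod (u * u') (v * v').
Proof.
move=> [Lu Lv Juv] [Lu' Lv' Juv']; split; [exact: LM | exact: LM |].
have -> : u * u' - v * v' = u * (u' - v') + v' * (u - v) by ring.
by apply: JD; apply: JM.
Qed.

Lemma congr_modX u v k : congr_mod u v -> congr_mod (u ^+ k) (v ^+ k).
Proof.
move=> Cuv; elim: k => [|k IHk]; first by rewrite !expr0; apply: congr_mod_refl.
by rewrite !exprS; apply: congr_modM.
Qed.

Lemma mmap_congr_mod n (S : nzRingType) (f : S -> R) (a b : 'I_n -> R) p :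
  (forall c, L (f c)) -> (forall i, congr_mod (a i) (b i)) ->
  congr_mod (mmap f a p) (mmap f b p).
Proof.
move=> Lf Cab; apply: (big_ind2 congr_mod) => [||mono _].
- exact: congr_mod_refl.
- exact: congr_modD.
apply: congr_modM; first exact: congr_mod_refl.
apply: (big_ind2 congr_mod) => [||i _].
- exact: congr_mod_refl.
- exact: congr_modM.
- exact: congr_modX.
Qed.

End CongruenceModuloIdeal.

Lemma tofrac_poly_comp (K : fieldType) (m n : nat) (Q : {mpoly K[n]})
    (pi : 'I_n -> {mpoly K[m]}) :
  (poly_comp Q pi)%:F = rat_comp Q (fun i => (pi i)%:F).
Proof.
rewrite /poly_comp /rat_comp /mmap rmorph_sum; apply: eq_bigr => mono _.
rewrite rmorphM rmorph_prod; congr (_ * _); apply: eq_bigr => i _.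
exact: rmorphXn.
Qed.

Section Vanishing.
Context {K : fieldType} {m : nat}.
Implicit Types (X : point K m -> Prop) (p q : {mpoly K[m]}).

Lemma is_ideal_vanishing X : is_ideal (vanishing X).
Proof.
split; first by move=> x _; rewrite meval0.
  by move=> p q Xp Xq x Xx; rewrite mevalD Xp // Xq // addr0.
by move=> r p Xp x Xx; rewrite mevalM Xp // mulr0.
Qed.

Lemma algebraic_set_zero_locus p : algebraic_set (fun x => p.@[x] = 0).
Proof. by exists (eq^~ p) => x; split=> [px0 _ -> | ]; last apply. Qed.

Lemma irreducible_vanishingM {X p q} :
  irreducible X -> vanishing X (p * q) -> (exists2 x, X x & q.@[x] != 0) ->
  vanishing X p.
Proof.
move=> [_ irrX] Xpq [x Xx qx].
have cover y : X y -> p.@[y] = 0 \/ q.@[y] = 0.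
  move=> Xy; have /eqP := Xpq y Xy.
  by rewrite mevalM mulf_eq0 => /orP [] /eqP; [left | right].
have [//|Xq] := irrX _ _ (algebraic_set_zero_locus p)
  (algebraic_set_zero_locus q) cover.
by rewrite Xq ?eqxx in qx.
Qed.

End Vanishing.

Section LocalRing.
Context {K : fieldType} {m : nat} (x0 : point K m).
Implicit Types (I : {mpoly K[m]} -> Prop) (p : {mpoly K[m]}) (f g : ratfun K m).

Definition in_localized I f :=
  exists a b : {mpoly K[m]}, I a /\ b.@[x0] != 0 /\ f = a%:F / b%:F.

Lemma tofrac_neq0 p : p.@[x0] != 0 -> p%:F != 0 :> ratfun K m.
Proof. by apply: contra; rewrite tofrac_eq0 => /eqP ->; rewrite meval0. Qed.

Lemma is_ideal_root : is_ideal (fun p => p.@[x0] = 0).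
Proof.
split; first by rewrite meval0.
  by move=> p q p0 q0; rewrite mevalD p0 q0 addr0.
by move=> r p p0; rewrite mevalM p0 mulr0.
Qed.

Lemma in_localE f : in_local x0 f <-> in_localized (fun _ => True) f.
Proof. by split=> [[a [b]] | [a [b [_]]]]; exists a, b. Qed.

Section Localization.
Context {I : {mpoly K[m]} -> Prop}.
Hypothesis idealI : is_ideal I.

Lemma in_localized0 : in_localized I 0.
Proof.
case: idealI => I0 _ _; exists 0, 1; split=> //.
by rewrite mevalC oner_neq0 rmorph0 mul0r.
Qed.

Lemma in_localizedD {f g} :
  in_localized I f -> in_localized I g -> in_localized I (f + g).
Proof.
case: idealI => _ ID IM [a1 [b1 [Ia1 [b1x0 ->]]]] [a2 [b2 [Ia2 [b2x0 ->]]]].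
exists (a1 * b2 + a2 * b1), (b1 * b2).
split; first by apply: ID; rewrite mulrC; apply: IM.
by rewrite mevalM mulf_neq0 // addf_div ?tofrac_neq0 // rmorphD !rmorphM.
Qed.

Lemma in_localizedM {f g} :
  in_local x0 f -> in_localized I g -> in_localized I (f * g).
Proof.
case: idealI => _ _ IM [a1 [b1 [b1x0 ->]]] [a2 [b2 [Ia2 [b2x0 ->]]]].
exists (a1 * a2), (b1 * b2); split; first exact: IM.
by rewrite mevalM mulf_neq0 // mulf_div !rmorphM.
Qed.

End Localization.

Lemma in_local_localized {I f} : in_localized I f -> in_local x0 f.
Proof. by move=> [a [b [_ fE]]]; exists a, b. Qed.

Lemma in_local_tofrac p : in_local x0 p%:F.
Proof. by exists p, 1; rewrite mevalC oner_neq0 rmorph1 divr1. Qed.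

Lemma is_ideal_all : is_ideal (fun _ : {mpoly K[m]} => True).
Proof. by []. Qed.

Lemma in_localD {f g} : in_local x0 f -> in_local x0 g -> in_local x0 (f + g).
Proof.
move=> /in_localE Lf /in_localE Lg.
exact/in_localE/(in_localizedD is_ideal_all Lf Lg).
Qed.

Lemma in_localM {f g} : in_local x0 f -> in_local x0 g -> in_local x0 (f * g).
Proof.
by move=> Lf /in_localE Lg; exact/in_localE/(in_localizedM is_ideal_all Lf Lg).
Qed.

Lemma in_localizedN {I f} :
  is_ideal I -> in_localized I f -> in_localized I (- f).
Proof.
move=> idealI If; have -> : - f = (-1)%:F * f by rewrite rmorphN1 mulN1r.
exact: (in_localizedM idealI (in_local_tofrac (-1)) If).
Qed.

Lemma maxideal_1D_unit {r} :
  in_maxideal x0 r -> 1 + r != 0 /\ in_local x0 (1 + r)^-1.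
Proof.
move=> [a [b [ax0 [bx0 ->]]]].
have bax0 : (b + a).@[x0] != 0 by rewrite mevalD ax0 addr0.
have -> : 1 + a%:F / b%:F = (b + a)%:F / b%:F.
  by rewrite rmorphD mulrDl divff ?tofrac_neq0.
rewrite invf_div mulf_neq0 ?invr_eq0 ?tofrac_neq0 //.
by split=> //; exists b, (b + a).
Qed.

Lemma zero_germ_tofrac {X p} : irreducible X -> X x0 ->
  zero_germ X x0 p%:F -> vanishing X p.
Proof.
move=> irrX Xx0 [a [b [Xa [bx0 pE]]]].
have pbE : p * b = a.
  move/(congr1 ( *%R^~ b%:F)): pE; rewrite mulfVK ?tofrac_neq0 // -rmorphM.
  by move/eqP; rewrite tofrac_eq => /eqP.
have Xpb : vanishing X (p * b) by rewrite pbE.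
by apply: (irreducible_vanishingM irrX Xpb); exists x0.
Qed.

Section MulMaxideal.
Variables (X : point K m -> Prop) (c : ratfun K m).

(* Lifts to [K(y)] of the ideal [c m_x0] of P(X)_x0. *)
Definition in_mul_maxideal f :=
  exists r z, [/\ in_maxideal x0 r, zero_germ X x0 z & f = c * r + z].

Lemma rat_comp_congr {n} (P : {mpoly K[n]}) {a b : 'I_n -> ratfun K m} :
  (forall i, in_local x0 (a i)) -> (forall i, in_local x0 (b i)) ->
  (forall i, in_mul_maxideal (a i - b i)) ->
  in_mul_maxideal (rat_comp P a - rat_comp P b).
Proof.
have ideal_root := is_ideal_root; have ideal_vanishing := is_ideal_vanishing X.
move=> La Lb Jab.
suff [] : congr_mod (in_local x0) in_mul_maxideal (rat_comp P a) (rat_comp P b).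
  by [].
apply: mmap_congr_mod.
- exact: in_local_tofrac.
- exact: in_local_tofrac.
- exact: @in_localD.
- exact: @in_localM.
- exists 0, 0; rewrite mulr0 addr0.
  split=> //; first exact: in_localized0 ideal_root.
  exact: in_localized0 ideal_vanishing.
- move=> _ _ [r1 [z1 [Mr1 Zz1 ->]]] [r2 [z2 [Mr2 Zz2 ->]]].
  exists (r1 + r2), (z1 + z2); rewrite mulrDr addrACA.
  split=> //; first exact: (in_localizedD ideal_root Mr1 Mr2).
  exact: (in_localizedD ideal_vanishing Zz1 Zz2).
- move=> l _ Ll [r [z [Mr Zz ->]]].
  exists (l * r), (l * z); rewrite mulrDr mulrCA.
  split=> //; first exact: (in_localizedM ideal_root Ll Mr).
  exact: (in_localizedM ideal_vanishing Ll Zz).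
- by move=> coef; apply: in_local_tofrac.
- by move=> i; split.
Qed.

End MulMaxideal.
End LocalRing.

Lemma unit_factor_cancel (F : fieldType) (a c k r s y z : F) : 1 + s != 0 ->
  c * r + y + a - (1 + s)^-1 * (k + r) * (c * (1 + s) + z) =
  a - k * c + y - (1 + s)^-1 * (k + r) * z.
Proof. by move=> ?; field. Qed.

Theorem lemma2p4 (K : fieldType) (n m : nat)
  (P Q : {mpoly K[n]}) (X : point K m -> Prop)
  (pi : 'I_n -> {mpoly K[m]}) (x0 : point K m) (phi : 'I_n -> ratfun K m) :
  infinite_field K ->
  affine_variety X -> irreducible X -> nonsingular X ->
  X x0 ->
  (* Q o pi is not identically zero on X *)
  (exists x, X x /\ (poly_comp Q pi).@[x] != 0) ->
  (* (P o pi)/(Q o pi) belongs to P(X)_{x0} *)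
  (exists h, in_local x0 h /\
     zero_germ X x0 ((poly_comp P pi)%:F - h * (poly_comp Q pi)%:F)) ->
  (* phi is a germ of a regular mapping at x0 *)
  (forall i, in_local x0 (phi i)) ->
  (* phi_i - pi_i in (Q o pi) m_{x0} in P(X)_{x0} *)
  (forall i, exists r, in_maxideal x0 r /\
     zero_germ X x0 (phi i - (pi i)%:F - (poly_comp Q pi)%:F * r)) ->
  (* conclusion *)
  ~ zero_germ X x0 (rat_comp Q phi) /\
  (exists h, in_local x0 h /\
     zero_germ X x0 (rat_comp P phi - h * rat_comp Q phi)).
Proof.
move=> _ _ irrX _ Xx0 [x [Xx Qpi_x]] [h [Lh Zh]] Lphi dphi.
set c := (poly_comp Q pi)%:F in Zh dphi *.
have idealZ := is_ideal_vanishing X.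
have Lpi i : in_local x0 (pi i)%:F by exact: in_local_tofrac.
have Cphi i : in_mul_maxideal x0 X c (phi i - (pi i)%:F).
  have [r [Mr Zr]] := dphi i.
  by exists r, (phi i - (pi i)%:F - c * r); rewrite [RHS]addrC subrK.
have [r1 [z1 [Mr1 Zz1 EP]]] := rat_comp_congr x0 X c P Lphi Lpi Cphi.
have [r2 [z2 [Mr2 Zz2 EQ]]] := rat_comp_congr x0 X c Q Lphi Lpi Cphi.
rewrite -!tofrac_poly_comp -/c in EP EQ.
have [r2_neq0 Lr2V] := maxideal_1D_unit x0 Mr2.
have {EQ}Qphi : rat_comp Q phi = c * (1 + r2) + z2.
  by rewrite mulrDr mulr1 -addrA -EQ addrC subrK.
split.
  move=> ZQ; have Zc : zero_germ X x0 c.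
    have -> : c = (1 + r2)^-1 * (rat_comp Q phi - z2).
      by rewrite Qphi addrK mulrCA mulVf ?mulr1.
    apply: (in_localizedM x0 idealZ Lr2V).
    exact/(in_localizedD x0 idealZ ZQ)/(in_localizedN x0).
  by move: Qpi_x; rewrite (zero_germ_tofrac x0 irrX Xx0 Zc x Xx) eqxx.
have Lquot : in_local x0 ((1 + r2)^-1 * (h + r1)).
  exact/(in_localM x0 Lr2V)/(in_localD x0 Lh)/(in_local_localized x0)/Mr1.
exists ((1 + r2)^-1 * (h + r1)); split=> //.
move/eqP: EP; rewrite Qphi subr_eq => /eqP ->; rewrite unit_factor_cancel //.
apply: (in_localizedD x0 idealZ); first exact: (in_localizedD x0 idealZ Zh Zz1).
exact/(in_localizedN x0 idealZ)/(in_localizedM x0 idealZ Lquot).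
Qed.
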